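(* Let $\Sigma$ be a simplicial homologically smooth tropical fan of dimension $d$. For any integers $k$ and $q$, the sequence \[0\to C^{k,q}_c(\Sigma)\to C^{k,q}(\overline{\Sigma})\to\bigoplus_{\varrho\in\Sigma_1}C^{k,q}(\overline{\Sigma}^\varrho)\to\bigoplus_{\sigma\in\Sigma_2}C^{k,q}(\overline{\Sigma}^\sigma)\to\cdots\to\bigoplus_{\sigma\in\Sigma_{d-k}}C^{k,q}(\overline{\Sigma}^\sigma)\to0\] is exact, where the differentials are signed sums of identity maps: on the summand indexed by a face of $\overline{\Sigma}$, the map $C^{k,q}(\overline{\Sigma}^\sigma)\to C^{k,q}(\overline{\Sigma}^\zeta)$ (for $\sigma\subset\zeta$, $\dim\zeta=\dim\sigma+1$) is $\operatorname{sign}(\sigma,\zeta)$ times the identity of $F^k$ of that face if the face lies in $\overline{\Sigma}^\zeta_\infty$ and zero otherwise, and $C^{k,q}_c(\Sigma)\to C^{k,q}(\overline{\Sigma})$ is the identity onto the summands of faces of sedentarity $\underline0$.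
   Context: A tropical fan of dimension $d$ in $N_\mathbb{R}$ ($N$ a lattice) is a rational fan with all maximal cones of dimension $d$ and nonzero integer weights satisfying the balancing condition; simplicial means each cone $\sigma$ is generated by $\dim\sigma$ rays; homologically smooth means each open subset of the support satisfies tropical Poincaré duality (cap product with the fundamental class is an isomorphism from rational tropical cohomology to tropical Borel–Moore homology in complementary bidegrees). $\overline{\Sigma}$ is the canonical compactification (closure of $|\Sigma|$ in the tropical toric variety of $\Sigma$); its faces are the closures $\square^\tau_\eta$ of the sets $\eta^\tau_\infty$ of points of sedentarity $\tau$ lying over $\eta$, for $\tau\subseteq\eta$ in $\Sigma$; the faces of sedentarity $\underline0$ are the closures of the cones of $\Sigma$. For $\sigma\in\Sigma$, $\overline{\Sigma}^\sigma$ is identified with the closed stratum $\overline{\Sigma}^\sigma_\infty$ whose faces are the $\square^\tau_\eta$ with $\sigma\subseteq\tau\subseteq\eta$. For a face $\gamma$, $F^k(\gamma)$ is the dual of the multi-tangent space $F_k(\gamma)$ (sum of $\bigwedge^k$ of rational lattices of faces of the same sedentarity containing $\gamma$). Cellular cochain groups: $C^{k,q}_c(\Sigma)=\bigoplus_{\sigma\in\Sigma_q}F^k(\sigma)$, $C^{k,q}(\overline{\Sigma}^\sigma)=\bigoplus F^k(\gamma)$ over $q$-dimensional faces $\gamma$ of $\overline{\Sigma}^\sigma_\infty$. $\operatorname{sign}(\sigma,\zeta)\in\{\pm1\}$ are incidence signs determined by fixed orientations of the cones. *)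

From HB Require Import structures.
From mathcomp Require Import all_boot all_order all_algebra.
From mathcomp Require Import reals.
Set Implicit Arguments. Unset Strict Implicit. Unset Printing Implicit Defensive.
Import Order.TTheory GRing.Theory Num.Theory.
Local Open Scope ring_scope.

(* A simplicial rational fan in N_R = R^n, N = Z^n, is given by a finite     *)
(* type of rays [Rays], integral ray vectors [r], and the set [C] of cones,  *)
(* each simplicial cone being identified with its set of rays.               *)
Section Fans.
Variable n : nat.
Variable Rays : finType.
Variable r : Rays -> 'rV[int]_n.

Definition ratv (u : 'rV[int]_n) : 'rV[rat]_n := map_mx intr u.
Definition realv (R : realType) (u : 'rV[int]_n) : 'rV[R]_n := map_mx intr u.

Definition spanQ (S : {set Rays}) : {vspace 'rV[rat]_n} :=
  <<[seq ratv (r i) | i <- enum S]>>%VS.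

Definition realcone (R : realType) (S : {set Rays}) (v : 'rV[R]_n) : Prop :=
  exists a : Rays -> R, (forall i, 0 <= a i) /\ v = \sum_(i in S) a i *: realv R (r i).

Definition maximal (C : {set {set Rays}}) (S : {set Rays}) : bool :=
  (S \in C) && [forall T in C, (S \subset T) ==> (T == S)].

(* v is the primitive generator of N_sigma / N_tau pointing towards sigma *)
Definition primitive_vec (tau sigma : {set Rays}) (v : 'rV[int]_n) : Prop :=
  [/\ ratv v \in spanQ sigma,
      (forall u : 'rV[int]_n, ratv u \in spanQ sigma ->
          exists m : int, ratv (u - m *: v) \in spanQ tau) &
      (exists c : rat, 0 < c /\
          forall rho, rho \in sigma :\: tau -> ratv v - c *: ratv (r rho) \in spanQ tau)].

Definition balanced (C : {set {set Rays}}) (w : {set Rays} -> int) (d : nat) : Prop :=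
  forall tau, tau \in C -> #|tau|.+1 = d ->
    exists e : {set Rays} -> 'rV[int]_n,
      (forall sigma, sigma \in C -> tau \proper sigma -> #|sigma| = d ->
          primitive_vec tau sigma (e sigma)) /\
      ratv (\sum_(sigma in C | (tau \proper sigma) && (#|sigma| == d)) w sigma *: e sigma)
        \in spanQ tau.

Definition simplicial_tropical_fan (R : realType) (C : {set {set Rays}})
    (w : {set Rays} -> int) (d : nat) : Prop :=
  [/\ set0 \in C,
      (forall S T : {set Rays}, S \in C -> T \subset S -> T \in C),
      (forall i, [set i] \in C),
      (forall S, S \in C -> free [seq ratv (r i) | i <- enum S]) &
      (forall S T : {set Rays}, S \in C -> T \in C -> forall v : 'rV[R]_n,
          realcone S v /\ realcone T v <-> realcone (S :&: T) v)] /\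
  [/\ (forall S, maximal C S -> #|S| = d),
      (forall S, maximal C S -> w S != 0) &
      balanced C w d].

(* Exterior powers of Q^n, in Pluecker coordinates (indexed by subsets).     *)
Definition Ext := {ffun {set 'I_n} -> rat^o}.

Definition wedge (k : nat) (v : 'I_k -> 'rV[rat]_n) : Ext :=
  [ffun I : {set 'I_n} => if #|I| == k then
     \det (\matrix_(i < k, j < k) \sum_(l in I | index l (enum I) == j) (v i) 0 l)
   else 0].

Definition wedgeSpace (k : nat) (W : {vspace 'rV[rat]_n}) : {vspace Ext} :=
  <<[seq wedge (fun i => tnth (vbasis W) (f i)) | f : {ffun 'I_k -> 'I_(\dim W)}]>>%VS.

(* a linear projection Q^n -> Q^n with kernel N_{tau,Q}; it identifies       *)
(* N_Q / N_{tau,Q} with its image                                          *)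
Definition pi_tau (tau : {set Rays}) : 'End('rV[rat]_n) :=
  (\1 - projv (spanQ tau))%VF.

Variable C : {set {set Rays}}.
Variable k : nat.

(* multi-tangent space F_k of the face \square^tau_eta of \overline\Sigma:   *)
Definition Fk (tau eta : {set Rays}) : {vspace Ext} :=
  (\sum_(eta' in C | eta \subset eta') wedgeSpace k (pi_tau tau @: spanQ eta'))%VS.

Definition Fd (tau eta : {set Rays}) := 'Hom(subvs_of (Fk tau eta), rat^o).

(* incidence sign for sigma a facet of zeta, with orientations of the cones *)
(* given by the order of the rays times the sign (-1)^(eps sigma)           *)
Definition sgn (eps : {set Rays} -> bool) (sigma zeta : {set Rays}) : rat :=
  (-1) ^+ (eps sigma (+) eps zeta (+)
     odd #|[set x in sigma | [exists y in zeta :\: sigma,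
                                 (enum_rank x < enum_rank y)%N]]|).

(* cochains: C_c^{k,q}(Sigma) = \oplus_{eta in Sigma_q} F^k(eta)            *)
Definition Cc := forall eta : {set Rays}, Fd set0 eta.
Definition in_Cc (q : nat) (y : Cc) : Prop :=
  forall eta, ~~ ((eta \in C) && (#|eta| == q)) -> y eta = 0.

(* \oplus_{sigma in Sigma_j} C^{k,q}(\overline\Sigma^sigma), the summand   *)
(* (sigma, tau, eta) being F^k(\square^tau_eta), sigma <= tau <= eta        *)
Definition Tc := forall sigma tau eta : {set Rays}, Fd tau eta.
Definition in_T (j q : nat) (x : Tc) : Prop :=
  forall sigma tau eta : {set Rays},
    ~~ [&& sigma \in C, #|sigma| == j, sigma \subset tau, tau \subset eta,
           eta \in C & #|eta| == (#|tau| + q)%N] ->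
    x sigma tau eta = 0.

(* C_c^{k,q}(Sigma) -> C^{k,q}(\overline\Sigma): identity onto sedentarity 0 *)
Definition dc (y : Cc) : Tc :=
  fun sigma tau eta =>
    match eqVneq tau set0 with
    | EqNotNeq e =>
        if sigma == set0 then eq_rect set0 (fun t => Fd t eta) (y eta) tau (esym e)
        else 0
    | NeqNotEq _ => 0
    end.

Definition dT (eps : {set Rays} -> bool) (x : Tc) : Tc :=
  fun zeta tau eta =>
    if (zeta \in C) && (zeta \subset tau) then
      \sum_(sigma in C | (sigma \subset zeta) && (#|sigma|.+1 == #|zeta|))
         sgn eps sigma zeta *: x sigma tau eta
    else 0.

End Fans.

(* For a fixed face \square^tau_eta of the compactification, the summands indexed by it
   form, as sigma runs over the faces of tau, the augmented simplicial cochain complex of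
   the full simplex on the rays of tau, with coefficients in F^k(\square^tau_eta).  For
   tau <> 0 this complex is contractible: coning with a ray a of tau, i.e.
   x |-> (sigma |-> sign(sigma, a + sigma) x(a + sigma)), is a contracting homotopy.  The
   truncation at Sigma_{d-k} does no harm because F^k(\square^tau_eta) = 0 as soon as
   |tau| + k > d, every N_eta' / N_tau having dimension at most d - |tau|.  The faces with
   tau = 0 are those of sedentarity 0, which form the image of C_c^{k,q}(Sigma). *)

From HB Require Import structures.
From mathcomp Require Import all_boot all_order all_algebra.
From mathcomp Require Import reals ring zify.
Set Implicit Arguments. Unset Strict Implicit. Unset Printing Implicit Defensive.
Import Order.TTheory GRing.Theory Num.Theory.
Local Open Scope ring_scope.

Section IncidenceSigns.
Variables (Rays : finType) (eps : {set Rays} -> bool).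
Implicit Types S T Z s : {set Rays}.

Definition card_below S (y : Rays) := #|[set x in S | (enum_rank x < enum_rank y)%N]|.

Lemma sgn_setU1 S y : y \notin S ->
  sgn eps S (y |: S) = (-1) ^+ (eps S (+) eps (y |: S) (+) odd (card_below S y)).
Proof.
move=> yS; rewrite /sgn /card_below; congr ((-1) ^+ (_ (+) _ (+) odd _)).
apply: eq_card => x; rewrite !inE; congr (_ && _).
apply/existsP/idP => [[z]|lt_xy]; last by exists y; rewrite !inE eqxx yS.
by rewrite !inE => /andP[/andP[zS /predU1P[-> //|zS']]]; rewrite zS' in zS.
Qed.

Lemma card_below_setU1 a S y : a \notin S ->
  card_below (a |: S) y = ((enum_rank a < enum_rank y)%N + card_below S y)%N.
Proof. by move=> aS; rewrite /card_below -!sum1dep_card !big_mkcondr big_setU1. Qed.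

Lemma sgnK S T : sgn eps S T * sgn eps S T = 1.
Proof. by rewrite -expr2 sqrr_sign. Qed.

Lemma sgn_anticomm S a b : a != b -> a \notin S -> b \notin S ->
  sgn eps S (a |: S) * sgn eps (a |: S) (b |: (a |: S)) =
  - (sgn eps S (b |: S) * sgn eps (b |: S) (a |: (b |: S))).
Proof.
move=> ab aS bS.
have baS : b \notin a |: S by rewrite !inE negb_or eq_sym ab.
have abS : a \notin b |: S by rewrite !inE negb_or ab.
have rank_ba : (enum_rank b < enum_rank a)%N = ~~ (enum_rank a < enum_rank b)%N.
  have ne : (enum_rank a : nat) != enum_rank b.
    by rewrite (inj_eq val_inj) (inj_eq enum_rank_inj).
  by rewrite ltnNge leq_eqVlt (negbTE ne).
rewrite !sgn_setU1 // !card_below_setU1 // (setUCA [set b]) rank_ba.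
rewrite !oddD !oddb !signr_addb signrN.
by case: (eps (a |: S)); case: (eps (b |: S)); rewrite /= ?expr0 ?expr1; ring.
Qed.

Lemma sgn_setD1_anticomm Z b c : b \in Z -> c \in Z -> b != c ->
  sgn eps (Z :\ b :\ c) (Z :\ b) * sgn eps (Z :\ b) Z =
  - (sgn eps (Z :\ c :\ b) (Z :\ c) * sgn eps (Z :\ c) Z).
Proof.
move=> bZ cZ bc.
have cZb : c \in Z :\ b by rewrite !inE eq_sym bc cZ.
have bZc : b \in Z :\ c by rewrite !inE bc bZ.
have Zcb : Z :\ c :\ b = Z :\ b :\ c by rewrite !setDDl setUC.
have := @sgn_anticomm (Z :\ b :\ c) c b; rewrite !inE !eqxx andbF eq_sym => /(_ bc isT isT).
by rewrite (setD1K cZb) (setD1K bZ) -Zcb (setD1K bZc) (setD1K cZ).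
Qed.

Lemma sgn_cone_anticomm s a b : b \in s -> a \notin s ->
  sgn eps (s :\ b) s * sgn eps (s :\ b) (a |: (s :\ b)) =
  - (sgn eps s (a |: s) * sgn eps (a |: (s :\ b)) (a |: s)).
Proof.
move=> bs aS; have ba : b != a by apply: contraNneq aS => <-.
have aSb : a \notin s :\ b by rewrite inE negb_and aS orbT.
have := sgn_anticomm ba (negbT (setD11 b s)) aSb; rewrite (setD1K bs) setUCA (setD1K bs).
set u := sgn eps _ s; set v := sgn eps s _; set w := sgn eps _ (a |: (s :\ b)).
set z := sgn eps _ (a |: s) => uv.
have vv : v * v = 1 := sgnK _ _; have ww : w * w = 1 := sgnK _ _.
transitivity (u * v * (v * w)); first by rewrite mulrA -(mulrA u) vv mulr1.
by rewrite uv -[RHS]mul1r -ww; ring.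
Qed.

End IncidenceSigns.

Lemma sum_facets (T : finType) (C : {set {set T}}) (V : nmodType) (F : {set T} -> V) z :
    (forall S U : {set T}, S \in C -> U \subset S -> U \in C) -> z \in C ->
  \sum_(s in C | (s \subset z) && (#|s|.+1 == #|z|)) F s = \sum_(b in z) F (z :\ b).
Proof.
move=> C_closed zC.
have inj : {in z &, injective (fun b => z :\ b)}.
  move=> b c bz cz /setP /(_ c); rewrite !inE eqxx cz andbT /=.
  by case: eqP => // ->.
rewrite -(big_imset F inj) /=; apply: eq_bigl => s.
apply/idP/imsetP => [/andP[_ /andP[sz /eqP card_s]]|[b bz ->]]; last first.
  by rewrite (C_closed _ _ zC (subsetDl _ _)) subsetDl (cardsD1 b z) bz /= add1n.
have /cards1P[b zs_b] : #|z :\: s| == 1%N by rewrite cardsD (setIidPr sz) -card_s subSnn.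
have /setDP[bz bs] : b \in z :\: s by rewrite zs_b set11.
exists b => //; apply/setP => x; rewrite !inE.
have /setP/(_ x) := zs_b; rewrite !inE.
case: (boolP (x \in s)) => [xs _|_ /= ->]; last by case: (x == b).
by rewrite (subsetP sz x xs) andbT; apply/esym; apply: contraNneq bs => <-.
Qed.

Lemma lfun_subvs0 (K : fieldType) (vT wT : vectType K) (U : {vspace vT})
    (f : 'Hom(subvs_of U, wT)) : U = 0%VS -> f = 0.
Proof.
move=> U0; apply/lfunP => u; rewrite zero_lfunE.
suff -> : u = 0 by rewrite linear0.
by apply: val_inj; apply/eqP; rewrite /= -memv0 -U0 subvsP.
Qed.

Lemma wedgeSpace_eq0 n k (W : {vspace 'rV[rat]_n}) : (\dim W < k)%N -> wedgeSpace k W = 0%VS.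
Proof.
move=> dimW_lt_k; apply/eqP; rewrite -subv0; apply/span_subvP => _ /mapP[f _ ->].
rewrite memv0; apply/eqP/ffunP => I; rewrite !ffunE; case: ifP => // _.
have /injectivePn[i1 [i2 i12 f12]] : ~~ injectiveb f.
  by apply: contraL dimW_lt_k => /injectiveP/leq_card; rewrite !card_ord -leqNgt.
by rewrite (determinant_alternate i12) // => j; rewrite !mxE f12.
Qed.

Section Vanishing.
Variables (n : nat) (Rays : finType) (r : Rays -> 'rV[int]_n).
Variables (C : {set {set Rays}}) (k d : nat).
Hypothesis C_closed : forall S T : {set Rays}, S \in C -> T \subset S -> T \in C.
Hypothesis C_free : forall S, S \in C -> free [seq ratv (r i) | i <- enum S].
Hypothesis maximal_card : forall S, maximal C S -> #|S| = d.
Implicit Types S tau eta : {set Rays}.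

Lemma card_cone_le_dim S : S \in C -> (#|S| <= d)%N.
Proof.
move=> SC.
have [M /andP[MC SM] Mmax] := @arg_maxnP _ S (fun T => (T \in C) && (S \subset T))
  (fun T => #|T|) (introT andP (conj SC (subxx S))).
rewrite -(maximal_card (S := M)); first exact: subset_leq_card.
rewrite /maximal MC; apply/forall_inP => T TC; apply/implyP => MT.
by rewrite eq_sym eqEcard MT; apply: Mmax; rewrite TC (subset_trans SM MT).
Qed.

Lemma dim_pi_tau_span tau eta : tau \in C -> tau \subset eta ->
  (\dim (pi_tau r tau @: spanQ r eta) + #|tau| <= #|eta|)%N.
Proof.
move=> tauC tau_eta.
have dim_eta : (\dim (spanQ r eta) <= #|eta|)%N.
  by have := dim_span [seq ratv (r i) | i <- enum eta]; rewrite size_map -cardE.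
have dim_tau : \dim (spanQ r tau) = #|tau|.
  by rewrite /spanQ (eqP (C_free tauC)) size_map -cardE.
have tau_ker : (spanQ r tau <= spanQ r eta :&: lker (pi_tau r tau))%VS.
  rewrite subv_cap; apply/andP; split.
    apply: sub_span => v /mapP[i]; rewrite mem_enum => itau ->.
    by apply: map_f; rewrite mem_enum (subsetP tau_eta).
  apply/subvP => v vtau; rewrite memv_ker /pi_tau.
  by rewrite add_lfunE opp_lfunE id_lfunE projv_id // subrr.
rewrite -dim_tau; apply: leq_trans dim_eta.
by rewrite -(limg_ker_dim (pi_tau r tau) (spanQ r eta)) addnC leq_add2r dimvS.
Qed.

Lemma Fk_eq0 tau eta : eta \in C -> tau \subset eta -> (d < #|tau| + k)%N ->
  Fk r C k tau eta = 0%VS.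
Proof.
move=> etaC tau_eta d_lt; rewrite /Fk big1 // => eta' /andP[eta'C eta_eta'].
have tau_eta' := subset_trans tau_eta eta_eta'.
apply: wedgeSpace_eq0; rewrite -(ltn_add2r #|tau|).
apply: leq_ltn_trans (dim_pi_tau_span (C_closed eta'C tau_eta') tau_eta') _.
by apply: leq_ltn_trans (card_cone_le_dim eta'C) _; rewrite addnC.
Qed.

End Vanishing.

Lemma sum_antisym_eq0 (K : numFieldType) (V : lmodType K) (I : finType) (A : {set I})
    (G : I -> I -> V) :
  {in A &, forall b c, b != c -> G c b = - G b c} ->
  \sum_(b in A) \sum_(c in A :\ b) G b c = 0.
Proof.
move=> G_anti.
pose H b c := if c != b then G b c else 0.
have H_anti : {in A &, forall b c, H c b = - H b c}.
  move=> b c bA cA; rewrite /H eq_sym; case: eqVneq => [_|cb]; first by rewrite oppr0.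
  by apply: G_anti; rewrite // eq_sym.
have -> : \sum_(b in A) \sum_(c in A :\ b) G b c = \sum_(b in A) \sum_(c in A) H b c.
  apply: eq_bigr => b bA; rewrite [RHS](big_setD1 b bA) /H eqxx /= add0r.
  by apply: eq_bigr => c /setD1P[-> _].
set S := \sum_(b in A) _.
have SN : S = - S.
  rewrite {1}/S exchange_big /S -sumrN; apply: eq_bigr => c cA.
  by rewrite -sumrN; apply: eq_bigr => b bA; exact: H_anti cA bA.
have : (2%:R : K) *: S = 0 by rewrite scaler_nat mulr2n {1}SN addNr.
by move/eqP; rewrite scaler_eq0 pnatr_eq0 => /eqP.
Qed.

Section CochainComplex.
Variables (n : nat) (Rays : finType) (r : Rays -> 'rV[int]_n).
Variables (C : {set {set Rays}}) (k q : nat) (eps : {set Rays} -> bool).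
Hypothesis C_closed : forall S T : {set Rays}, S \in C -> T \subset S -> T \in C.
Implicit Types (s sigma zeta tau eta : {set Rays}) (x : Tc r C k) (y : Cc r C k).

Local Notation dT := (dT eps).

Lemma dc_set0 y sigma eta : dc y sigma set0 eta = if sigma == set0 then y eta else 0.
Proof.
rewrite /dc; case: eqVneq => [e|]; last by move/eqP.
by rewrite (eq_irrelevance e erefl).
Qed.

Lemma dc_eq0 y sigma tau eta : tau != set0 -> dc y sigma tau eta = 0.
Proof. by rewrite /dc; case: eqVneq. Qed.

Lemma dT_set0 x tau eta : dT x set0 tau eta = 0.
Proof. by rewrite /dT; case: ifP => // _; apply: big1 => s /and3P[]; rewrite cards0. Qed.

Lemma dT_dc y zeta tau eta : dT (dc y) zeta tau eta = 0.
Proof.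
rewrite /dT; case: ifP => // /andP[_ zeta_tau].
apply: big1 => s /andP[_ /andP[_ /eqP card_zeta]].
have [tau0|tau_neq0] := eqVneq tau set0; last by rewrite dc_eq0 ?scaler0.
by move: zeta_tau card_zeta; rewrite tau0 subset0 => /eqP ->; rewrite cards0.
Qed.

Lemma dT_dT x zeta tau eta : dT (dT x) zeta tau eta = 0.
Proof.
rewrite {1}/dT; case: ifP => // /andP[zetaC zeta_tau].
rewrite (sum_facets _ C_closed zetaC).
transitivity (\sum_(b in zeta) \sum_(c in zeta :\ b)
   (sgn eps (zeta :\ b :\ c) (zeta :\ b) * sgn eps (zeta :\ b) zeta) *:
     x (zeta :\ b :\ c) tau eta).
  apply: eq_bigr => b _; have facetC := C_closed zetaC (subsetDl zeta [set b]).
  rewrite /dT facetC (subset_trans (subsetDl _ _) zeta_tau) /=.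
  rewrite (sum_facets _ C_closed facetC) scaler_sumr.
  by apply: eq_bigr => c _; rewrite scalerA mulrC.
apply: sum_antisym_eq0 => b c bz cz bc.
by rewrite (sgn_setD1_anticomm eps bz cz bc) scaleNr opprK !setDDl setUC.
Qed.

Lemma in_T_dT j x : in_T j q x -> in_T j.+1 q (dT x).
Proof.
move=> x_supp zeta tau eta not_supp; rewrite /dT; case: ifP => // /andP[zetaC zeta_tau].
apply: big1 => s /andP[sC /andP[s_zeta /eqP card_zeta]].
rewrite x_supp ?scaler0 //; apply: contra not_supp => /and5P[_ card_s _ tau_eta etaq].
by rewrite zetaC zeta_tau tau_eta -card_zeta (eqP card_s) eqxx.
Qed.

Definition contract x : Tc r C k := fun s tau eta =>
  if [pick a in tau] is Some a then
    if a \notin s then sgn eps s (a |: s) *: x (a |: s) tau eta else 0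
  else 0.

Lemma in_T_contract j x : in_T j.+1 q x -> in_T j q (contract x).
Proof.
move=> x_supp s tau eta not_supp; rewrite /contract; case: pickP => // a _.
case: ifP => // aS; rewrite x_supp ?scaler0 //; apply: contra not_supp.
move=> /and5P[asC card_as as_tau -> ->]; rewrite cardsU1 aS /= add1n eqSS in card_as.
by rewrite (C_closed asC (subsetUr _ _)) card_as (subset_trans (subsetUr _ _) as_tau).
Qed.

Lemma contract_homotopy x s tau eta : tau \in C -> s \subset tau -> tau != set0 ->
  dT (contract x) s tau eta + contract (dT x) s tau eta = x s tau eta.
Proof.
move=> tauC s_tau /set0Pn[a0 a0_tau]; have sC := C_closed tauC s_tau.
have [a pick_a a_tau] : exists2 a, [pick a in tau] = Some a & a \in tau.
  by case: pickP => [a|/(_ a0)]; [exists a | rewrite a0_tau].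
rewrite {1}/dT sC s_tau /= (sum_facets _ C_closed sC) /contract pick_a.
have [a_s|a_notin_s] := boolP (a \in s); rewrite ?a_s ?a_notin_s /=.
  rewrite (big_setD1 a a_s) /= setD11 (setD1K a_s) scalerA sgnK scale1r.
  by rewrite big1 ?addr0 // => b /setD1P[ba _]; rewrite !inE eq_sym ba a_s scaler0.
have as_tau : a |: s \subset tau by rewrite subUset sub1set a_tau s_tau.
have asC := C_closed tauC as_tau.
rewrite /dT asC as_tau /= (sum_facets _ C_closed asC) big_setU1 //= (setU1K a_notin_s).
rewrite scalerDr scalerA sgnK scale1r addrCA scaler_sumr -big_split /=.
rewrite big1 ?addr0 // => b bs; have ba : b != a by apply: contraNneq a_notin_s => <-.
have -> : (a |: s) :\ b = a |: (s :\ b).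
  by apply/setP => c; rewrite !inE; case: (eqVneq c a) => [->|] //=; rewrite eq_sym ba.
rewrite inE negb_and a_notin_s orbT !scalerA -scalerDl.
by rewrite (sgn_cone_anticomm eps bs a_notin_s) addNr scale0r.
Qed.

Lemma coboundary_of_cocycle x s tau eta : tau \in C -> s \subset tau -> tau != set0 ->
    (forall zeta, zeta \subset tau -> #|zeta| = #|s|.+1 -> dT x zeta tau eta = 0) ->
  x s tau eta = dT (contract x) s tau eta.
Proof.
move=> tauC s_tau tau_neq0 cocycle.
suff contract_dT0 : contract (dT x) s tau eta = 0.
  by rewrite -(contract_homotopy x eta tauC s_tau tau_neq0) contract_dT0 addr0.
rewrite /contract; case: pickP => // a a_tau; case: ifP => // a_notin_s.
by rewrite cocycle ?scaler0 // ?subUset ?sub1set ?a_tau ?s_tau // cardsU1 a_notin_s.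
Qed.

End CochainComplex.

Section Exactness.
Variables (n : nat) (Rays : finType) (r : Rays -> 'rV[int]_n).
Variables (C : {set {set Rays}}) (k d q : nat) (eps : {set Rays} -> bool).
Hypothesis C_closed : forall S T : {set Rays}, S \in C -> T \subset S -> T \in C.
Hypothesis C_free : forall S, S \in C -> free [seq ratv (r i) | i <- enum S].
Hypothesis maximal_card : forall S, maximal C S -> #|S| = d.
Implicit Types (sigma zeta tau eta : {set Rays}) (x : Tc r C k).

Local Notation dT := (dT eps).

Definition is_summand j sigma tau eta := [&& sigma \in C, #|sigma| == j, sigma \subset tau,
  tau \subset eta, eta \in C & #|eta| == (#|tau| + q)%N].

Lemma Fd_eq0 tau eta : eta \in C -> tau \subset eta -> (d < #|tau| + k)%N ->
  forall f : Fd r C k tau eta, f = 0.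
Proof.
by move=> etaC tau_eta d_lt f; apply/lfun_subvs0/(Fk_eq0 C_closed C_free maximal_card).
Qed.

Lemma dc_exact x : in_T 0 q x ->
    ((0 < d - k)%N -> forall zeta tau eta, dT x zeta tau eta = 0) ->
  exists y : Cc r C k, in_Cc q y /\ forall sigma tau eta, x sigma tau eta = dc y sigma tau eta.
Proof.
move=> x_supp cocycle; exists (fun eta => x set0 set0 eta); split.
  move=> eta not_supp; apply: x_supp; apply: contra not_supp.
  by move=> /and5P[_ _ _ _ /andP[-> card_eta]]; rewrite cards0 add0n in card_eta.
move=> sigma tau eta; have [->|tau_neq0] := eqVneq tau set0.
  rewrite dc_set0; case: eqP => [->//|sigma_neq0]; apply: x_supp.
  by apply/negP => /and5P[_ /eqP/cards0_eq/sigma_neq0].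
rewrite dc_eq0 //.
have [|/x_supp //] := boolP (is_summand 0 sigma tau eta).
move=> /and5P[_ /eqP/cards0_eq -> _ tau_eta /andP[etaC _]].
have [d_lt|d_ge] := ltnP d (#|tau| + k); first exact: Fd_eq0 etaC tau_eta d_lt (x _ _ _).
transitivity (dT (contract eps x) set0 tau eta); last exact: dT_set0.
apply: (coboundary_of_cocycle C_closed (C_closed etaC tau_eta) (sub0set tau) tau_neq0).
move=> zeta zeta_tau card_zeta; apply: cocycle.
by have := subset_leq_card zeta_tau; rewrite card_zeta cards0; lia.
Qed.

Lemma dT_exact j x : (0 < j <= d - k)%N -> in_T j q x ->
    ((j < d - k)%N -> forall zeta tau eta, dT x zeta tau eta = 0) ->
  exists y : Tc r C k, in_T j.-1 q y /\ forall sigma tau eta, x sigma tau eta = dT y sigma tau eta.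
Proof.
case: j => // j /andP[_ j_lt] x_supp cocycle.
have y_supp : in_T j q (contract eps x) := in_T_contract eps C_closed x_supp.
exists (contract eps x); split => // sigma tau eta.
have [|not_supp] := boolP (is_summand j.+1 sigma tau eta); last first.
  by rewrite x_supp // (in_T_dT eps y_supp).
move=> /and5P[_ /eqP card_sigma sigma_tau tau_eta /andP[etaC _]].
have [d_lt|d_ge] := ltnP d (#|tau| + k).
  by have Fd0 := Fd_eq0 etaC tau_eta d_lt; rewrite (Fd0 (x _ _ _)) (Fd0 (dT _ _ _ _)).
have tau_neq0 : tau != set0.
  by rewrite -card_gt0 (leq_trans _ (subset_leq_card sigma_tau)) ?card_sigma.
apply: (coboundary_of_cocycle C_closed (C_closed etaC tau_eta) sigma_tau tau_neq0).
move=> zeta zeta_tau card_zeta; apply: cocycle.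
by have := subset_leq_card zeta_tau; rewrite card_zeta card_sigma; lia.
Qed.

End Exactness.

Theorem proposition3p4 (R : realType) (n d : nat) (Rays : finType)
    (r : Rays -> 'rV[int]_n) (C : {set {set Rays}}) (w : {set Rays} -> int)
    (eps : {set Rays} -> bool) (k q : nat) :
  simplicial_tropical_fan r R C w d ->
  [/\ (* the composite C_c -> C(\overline\Sigma) -> \oplus_{Sigma_1} vanishes *)
      (forall y : Cc r C k, in_Cc q y -> (0 < d - k)%N ->
         forall zeta tau eta, dT eps (dc y) zeta tau eta = 0),
      (* consecutive differentials compose to zero *)
      (forall (j : nat) (y : Tc r C k), (j.+2 <= d - k)%N -> in_T j q y ->
         forall zeta tau eta, dT eps (dT eps y) zeta tau eta = 0),
      (* injectivity of C_c -> C(\overline\Sigma) *)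
      (forall y : Cc r C k, in_Cc q y ->
         (forall sigma tau eta, dc y sigma tau eta = 0) -> forall eta, y eta = 0),
      (* exactness at C(\overline\Sigma) *)
      (forall x : Tc r C k, in_T 0 q x ->
         ((0 < d - k)%N -> forall zeta tau eta, dT eps x zeta tau eta = 0) ->
         exists y : Cc r C k, in_Cc q y /\
           forall sigma tau eta, x sigma tau eta = dc y sigma tau eta) &
      (* exactness at \oplus_{sigma in Sigma_j} C(\overline\Sigma^sigma), 1 <= j <= d-k *)
      (forall (j : nat) (x : Tc r C k), (0 < j <= d - k)%N -> in_T j q x ->
         ((j < d - k)%N -> forall zeta tau eta, dT eps x zeta tau eta = 0) ->
         exists y : Tc r C k, in_T j.-1 q y /\
           forall sigma tau eta, x sigma tau eta = dT eps y sigma tau eta)].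
Proof.
move=> [[_ C_closed _ C_free _] [maximal_card _ _]]; split.
- by move=> y _ _; exact: dT_dc.
- by move=> j y _ _; exact: dT_dT.
- by move=> y _ dc_y0 eta; have := dc_y0 set0 set0 eta; rewrite dc_set0 eqxx.
- exact: dc_exact C_closed C_free maximal_card.
- exact: dT_exact C_closed C_free maximal_card.
Qed.
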